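(* Let $\tau>0$ and $f\in C(\mathbb R_+\times\mathbb R,\mathbb R)$ be regular and asymptotically $\tau$-periodic in time, $f=P+R$. Assume the $\tau$-periodic solutions of $x'=P(t,x)$ are isolated, and that for some $u_0$ the solution $\varphi(t,u_0,f)$ of $x'=f(t,x)$, $x(0)=u_0$, is bounded on $\mathbb R_+$. Then $\varphi(t,u_0,f)$ is asymptotically $\tau$-periodic: there is a continuous $\tau$-periodic $p:\mathbb R_+\to\mathbb R$ with $\varphi(t,u_0,f)-p(t)\to0$ as $t\to+\infty$.
   Context: $C(\mathbb R_+\times\mathbb R,\mathbb R)$ has the compact-open topology; $f^h(t,x)=f(t+h,x)$; $H(f)$ is the closure of $\{f^h:h\ge0\}$. $f$ is regular if for every $g\in H(f)$ and $v\in\mathbb R$ the equation $y'=g(t,y)$ has a unique solution $\varphi(t,v,g)$ with $\varphi(0,v,g)=v$, defined on $\mathbb R_+$. $f$ is asymptotically $\tau$-periodic in time if $f=P+R$ with $P,R$ continuous, $P(t+\tau,x)=P(t,x)$, and $R(t,x)\to0$ as $t\to+\infty$ uniformly in $x$ on compact sets. A $\tau$-periodic solution $\varphi(t,u_0,P)$ (i.e. $\varphi(\tau,u_0,P)=u_0$) of $x'=P(t,x)$ is isolated if there is $\delta>0$ such that no $u\ne u_0$ with $|u-u_0|<\delta$ gives a $\tau$-periodic solution $\varphi(t,u,P)$. *)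

From Stdlib Require Import Reals Lra.
Open Scope R_scope.

(* Elements of C(R_+ x R, R) are represented by functions R -> R -> R;
   only their values on t >= 0 matter. *)

Definition cont_RpR (F : R -> R -> R) : Prop :=
  forall t x, 0 <= t -> forall eps, 0 < eps -> exists delta, 0 < delta /\
    forall t' x', 0 <= t' -> Rabs (t' - t) < delta -> Rabs (x' - x) < delta ->
      Rabs (F t' x' - F t x) < eps.

Definition cont_Rp (p : R -> R) : Prop :=
  forall t, 0 <= t -> forall eps, 0 < eps -> exists delta, 0 < delta /\
    forall t', 0 <= t' -> Rabs (t' - t) < delta -> Rabs (p t' - p t) < eps.

Definition shift (f : R -> R -> R) (h : R) : R -> R -> R :=
  fun t x => f (t + h) x.

(* g in H(f): g is continuous and lies in the compact-open closure of
   {f^h : h >= 0}.  Every compact subset of R_+ x R lies in some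
   [0,L] x [-L,L], so basic neighbourhoods of g are given by uniform
   closeness on such rectangles. *)
Definition in_hull (f g : R -> R -> R) : Prop :=
  cont_RpR g /\
  forall L eps, 0 < eps -> exists h, 0 <= h /\
    forall t x, 0 <= t <= L -> Rabs x <= L ->
      Rabs (shift f h t x - g t x) < eps.

Definition is_solution (g : R -> R -> R) (v : R) (y : R -> R) : Prop :=
  y 0 = v /\
  (forall t, 0 < t -> derivable_pt_lim y t (g t (y t))) /\
  (forall eps, 0 < eps -> exists delta, 0 < delta /\
     forall h, 0 < h < delta -> Rabs ((y h - y 0) / h - g 0 (y 0)) < eps).

Definition regular (f : R -> R -> R) : Prop :=
  cont_RpR f /\
  forall g, in_hull f g -> forall v,
    (exists y, is_solution g v y) /\
    (forall y1 y2, is_solution g v y1 -> is_solution g v y2 ->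
       forall t, 0 <= t -> y1 t = y2 t).

Definition asympt_periodic_decomp (tau : R) (f P Rm : R -> R -> R) : Prop :=
  cont_RpR P /\ cont_RpR Rm /\
  (forall t x, 0 <= t -> f t x = P t x + Rm t x) /\
  (forall t x, 0 <= t -> P (t + tau) x = P t x) /\
  (forall L eps, 0 < eps -> exists T, forall t x, T <= t -> Rabs x <= L ->
      Rabs (Rm t x) < eps).

(* u gives a tau-periodic solution phi(t,u,P): phi(tau,u,P) = u *)
Definition periodic_start (P : R -> R -> R) (tau u : R) : Prop :=
  exists y, is_solution P u y /\ y tau = u.

Definition periodic_solutions_isolated (P : R -> R -> R) (tau : R) : Prop :=
  forall u0, periodic_start P tau u0 ->
    exists delta, 0 < delta /\
      forall u, u <> u0 -> Rabs (u - u0) < delta -> ~ periodic_start P tau u.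

From Stdlib Require Import Reals Lra Lia Classical ClassicalEpsilon FunctionalExtensionality.
From Stdlib Require Import Ranalysis5.
From Coquelicot Require Import Rcomplements.
Open Scope R_scope.

(* The translates y_n(t) = y(t + n tau) of the bounded solution are uniformly bounded and, since
   y' = P + R with P bounded on bounded sets, equi-Lipschitz.  An Arzela-Ascoli argument shows
   that along every infinite set of indices they cluster uniformly on [0, tau], and since R
   vanishes at infinity each cluster point solves the limit equation x' = P(t, x); by uniqueness
   it is phi(., v, P) for some v.  Hence a_n = y(n tau) asymptotically follows the Poincare map
   v |-> phi(tau, v, P), which is monotone because solutions of a scalar equation cannot cross.
   If a_n oscillated between c1 < c2, every point in between would be a fixed point of the
   Poincare map, contradicting isolation.  So a_n converges to some v; then v is a fixed point,
   and y_n -> phi(., v, P) uniformly on [0, tau], which is the claim. *)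

Lemma eq_of_close (a b : R) : (forall eps, 0 < eps -> Rabs (a - b) <= eps) -> a = b.
Proof.
  intros H. apply Rle_antisym; apply Rle_plus_epsilon; intros eps heps;
    specialize (H eps heps); apply Rabs_le_between' in H; lra.
Qed.

Lemma INR_le_pow2 (j : nat) : INR j <= 2 ^ j.
Proof.
  induction j as [|j IH]; [simpl; lra|].
  rewrite S_INR. simpl. pose proof (pow_R1_Rle 2 j ltac:(lra)). lra.
Qed.

Lemma inv_INR_S_small (eps : R) : 0 < eps -> exists j, / INR (S j) < eps.
Proof.
  intros he. destruct (archimed_cor1 eps he) as [j [Hj hj]]. exists j.
  apply Rle_lt_trans with (/ INR j); [|exact Hj].
  apply Rinv_le_contravar; [apply lt_0_INR; lia|apply le_INR; lia].
Qed.

(** * Infinitely-often index sets *)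

Definition infinitely_often (A : nat -> Prop) : Prop :=
  forall N, exists n, (N <= n)%nat /\ A n.

Lemma infinitely_often_weaken (A B : nat -> Prop) :
  (forall n, A n -> B n) -> infinitely_often A -> infinitely_often B.
Proof. intros HAB HA N. destruct (HA N) as [n [hn An]]. eauto. Qed.

Lemma not_eventually_infinitely_often (Q : nat -> Prop) :
  ~ (exists N, forall n, (N <= n)%nat -> Q n) -> infinitely_often (fun n => ~ Q n).
Proof.
  intros H N. apply NNPP; intros HN. apply H. exists N. intros n hn.
  apply NNPP; intros Hq. apply HN. eauto.
Qed.

Lemma infinitely_often_or (A Q1 Q2 : nat -> Prop) :
  infinitely_often A -> (forall n, A n -> Q1 n \/ Q2 n) ->
  infinitely_often (fun n => A n /\ Q1 n) \/ infinitely_often (fun n => A n /\ Q2 n).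
Proof.
  intros HA H12.
  destruct (classic (infinitely_often (fun n => A n /\ Q1 n))) as [H1|H1]; [now left|right].
  intros N. apply not_all_ex_not in H1 as [N1 HN1].
  destruct (HA (max N N1)) as [n [hn An]]. exists n. split; [lia|split; [exact An|]].
  destruct (H12 n An) as [q|q]; [|exact q].
  exfalso. apply HN1. exists n. split; [lia|auto].
Qed.

Lemma forward_invariant (Q : nat -> Prop) (N n : nat) :
  (forall m, (N <= m)%nat -> Q m -> Q (S m)) -> (N <= n)%nat -> Q n ->
  forall m, (n <= m)%nat -> Q m.
Proof. intros HQ hn Qn m hm. induction hm as [|m hm IH]; [exact Qn|]. apply HQ; [lia|exact IH]. Qed.

Lemma cvg_of_cluster_value_no_oscillation (a : nat -> R) (v : R) :
  (forall eps, 0 < eps -> infinitely_often (fun n => Rabs (a n - v) <= eps)) ->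
  (forall c1 c2, c1 < c2 -> infinitely_often (fun n => a n <= c1) ->
     infinitely_often (fun n => c2 <= a n) -> False) ->
  Un_cv a v.
Proof.
  intros Hv Hosc eps he. apply NNPP. intros H.
  assert (Hfar : infinitely_often (fun n => ~ R_dist (a n) v < eps)).
  { apply not_eventually_infinitely_often. intros [N HN]. apply H. exists N. exact HN. }
  destruct (infinitely_often_or _ (fun n => v + eps <= a n) (fun n => a n <= v - eps) Hfar)
    as [Hup|Hdown].
  { intros n Hn. apply Rnot_lt_le in Hn. unfold R_dist, Rabs in Hn.
    destruct (Rcase_abs (a n - v)); [right|left]; lra. }
  - apply (Hosc (v + eps / 2) (v + eps)); [lra| |].
    + eapply infinitely_often_weaken; [|exact (Hv (eps / 2) ltac:(lra))].
      intros n Hn. apply Rabs_le_between' in Hn. lra.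
    + eapply infinitely_often_weaken; [|exact Hup]. intros n [_ Hn]. exact Hn.
  - apply (Hosc (v - eps) (v - eps / 2)); [lra| |].
    + eapply infinitely_often_weaken; [|exact Hdown]. intros n [_ Hn]. exact Hn.
    + eapply infinitely_often_weaken; [|exact (Hv (eps / 2) ltac:(lra))].
      intros n Hn. apply Rabs_le_between' in Hn. lra.
Qed.

Lemma infinitely_often_bisect (A : nat -> Prop) (x : nat -> R) (a w : R) :
  infinitely_often A -> (forall n, A n -> a <= x n <= a + w) ->
  exists A' a', (forall n, A' n -> A n) /\ infinitely_often A' /\
    forall n, A' n -> a' <= x n <= a' + w / 2.
Proof.
  intros HA Hx.
  destruct (infinitely_often_or A (fun n => x n <= a + w / 2) (fun n => a + w / 2 <= x n) HA)
    as [H|H].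
  { intros n _. destruct (Rle_or_lt (x n) (a + w / 2)); [left|right]; lra. }
  - exists (fun n => A n /\ x n <= a + w / 2), a.
    split; [tauto|split; [exact H|]]. intros n [An hn]. specialize (Hx n An). lra.
  - exists (fun n => A n /\ a + w / 2 <= x n), (a + w / 2).
    split; [tauto|split; [exact H|]]. intros n [An hn]. specialize (Hx n An). lra.
Qed.

Lemma infinitely_often_narrow (x : nat -> R) (j : nat) :
  forall A a w, infinitely_often A -> (forall n, A n -> a <= x n <= a + w) ->
  exists A' a', (forall n, A' n -> A n) /\ infinitely_often A' /\
    forall n, A' n -> a' <= x n <= a' + w / 2 ^ j.
Proof.
  induction j as [|j IH]; intros A a w HA Hx.
  - exists A, a. split; [auto|split; [exact HA|]]. intros n An. simpl.
    rewrite Rdiv_1_r. auto.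
  - destruct (IH A a w HA Hx) as [A1 [a1 [H1 [HA1 Hx1]]]].
    destruct (infinitely_often_bisect A1 x a1 (w / 2 ^ j) HA1 Hx1) as [A2 [a2 [H2 [HA2 Hx2]]]].
    exists A2, a2. split; [auto|split; [exact HA2|]]. intros n An.
    replace (w / 2 ^ S j) with (w / 2 ^ j / 2); [auto|].
    simpl. field. apply pow_nonzero. lra.
Qed.

Lemma infinitely_often_close (A : nat -> Prop) (x : nat -> R) (M d : R) :
  0 < d -> infinitely_often A -> (forall n, A n -> Rabs (x n) <= M) ->
  exists A', (forall n, A' n -> A n) /\ infinitely_often A' /\
    forall n m, A' n -> A' m -> Rabs (x n - x m) <= d.
Proof.
  intros hd HA Hx.
  destruct (INR_archimed d (2 * M) hd) as [j Hj].
  destruct (infinitely_often_narrow x j A (- M) (2 * M) HA) as [A' [a [HA' [HA'io Hx']]]].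
  { intros n An. specialize (Hx n An). apply Rabs_le_between in Hx. lra. }
  exists A'. split; [exact HA'|split; [exact HA'io|]]. intros n m An Am.
  assert (Hw : 2 * M / 2 ^ j <= d).
  { pose proof (INR_le_pow2 j). pose proof (pow_lt 2 j ltac:(lra)).
    apply Rle_div_l; [lra|]. nra. }
  pose proof (Hx' n An). pose proof (Hx' m Am). apply Rabs_le. lra.
Qed.

(** * Uniform cluster points of equi-Lipschitz families *)

Lemma infinitely_often_close_finite (x : nat -> nat -> R) (M d : R) (k : nat) :
  0 < d -> forall A, infinitely_often A ->
  (forall i n, (i <= k)%nat -> A n -> Rabs (x i n) <= M) ->
  exists A', (forall n, A' n -> A n) /\ infinitely_often A' /\
    forall i n m, (i <= k)%nat -> A' n -> A' m -> Rabs (x i n - x i m) <= d.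
Proof.
  intros hd. induction k as [|k IH]; intros A HA Hx.
  - destruct (infinitely_often_close A (x 0%nat) M d hd HA) as [A' [H1 [HA' Hx']]].
    { intros n An. apply Hx; auto. }
    exists A'. split; [exact H1|split; [exact HA'|]].
    intros i n m hi. replace i with 0%nat by lia. auto.
  - destruct (IH A HA) as [A1 [H1 [HA1 Hx1]]].
    { intros i n hi. apply Hx. lia. }
    destruct (infinitely_often_close A1 (x (S k)) M d hd HA1) as [A2 [H2 [HA2 Hx2]]].
    { intros n An. apply Hx; auto. }
    exists A2. split; [auto|split; [exact HA2|]]. intros i n m hi An Am.
    destruct (Nat.eq_dec i (S k)) as [->|ne]; [auto|]. apply Hx1; auto; lia.
Qed.

Lemma infinitely_often_uniformly_close (z : nat -> R -> R) (A : nat -> Prop) (L K M eps : R) :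
  0 <= L -> 0 <= K -> 0 < eps -> infinitely_often A ->
  (forall n t, A n -> 0 <= t <= L -> Rabs (z n t) <= M) ->
  (forall n t1 t2, A n -> 0 <= t1 <= L -> 0 <= t2 <= L ->
     Rabs (z n t1 - z n t2) <= K * Rabs (t1 - t2)) ->
  exists A', (forall n, A' n -> A n) /\ infinitely_often A' /\
    forall n m t, A' n -> A' m -> 0 <= t <= L -> Rabs (z n t - z m t) <= eps.
Proof.
  intros hL hK he HA Hb Hlip.
  set (h := eps / (3 * (K + 1))).
  assert (hh : 0 < h) by (unfold h; apply Rdiv_lt_0_compat; lra).
  assert (hKh : K * h <= eps / 3).
  { unfold h. replace (K * (eps / (3 * (K + 1)))) with (eps / 3 * (K / (K + 1))) by (field; lra).
    assert (K / (K + 1) <= 1) by (apply Rle_div_l; lra). nra. }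
  destruct (nfloor_ex (L / h)) as [k Hk]; [apply Rdiv_le_0_compat; lra|].
  destruct (infinitely_often_close_finite (fun i n => z n (INR i * h)) M (eps / 3) k
              ltac:(lra) A HA) as [A' [H1 [HA' Hx]]].
  { intros i n hi An. apply Hb; [exact An|split].
    - apply Rmult_le_pos; [apply pos_INR|lra].
    - apply Rle_div_r; [lra|]. apply Rle_trans with (INR k); [apply le_INR|]; lia || lra. }
  exists A'. split; [exact H1|split; [exact HA'|]]. intros n m t An Am ht.
  destruct (nfloor_ex (t / h)) as [i Hi]; [apply Rdiv_le_0_compat; lra|].
  assert (hik : (i <= k)%nat).
  { cut (INR i < INR k + 1); [intros Hlt; rewrite <- S_INR in Hlt; apply INR_lt in Hlt; lia|].
    apply Rle_lt_trans with (L / h); [|lra].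
    apply Rle_trans with (t / h); [lra|].
    apply Rmult_le_compat_r; [left; apply Rinv_0_lt_compat|]; lra. }
  assert (hti : INR i * h <= t <= INR i * h + h).
  { destruct Hi as [Hi1 Hi2]. split.
    - apply Rle_div_r; lra.
    - apply Rlt_div_l in Hi2; lra. }
  assert (hdist : forall p, A' p -> Rabs (z p t - z p (INR i * h)) <= eps / 3).
  { intros p Ap. pose proof (pos_INR i).
    eapply Rle_trans; [apply Hlip; auto; split; [apply Rmult_le_pos|]; lra|].
    eapply Rle_trans; [|exact hKh]. apply Rmult_le_compat_l; [lra|]. apply Rabs_le. lra. }
  pose proof (hdist n An) as Dn. pose proof (hdist m Am) as Dm.
  pose proof (Hx i n m hik An Am) as Dnm.
  apply Rabs_le_between in Dn, Dm, Dnm. apply Rabs_le. lra.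
Qed.

Definition uniform_cluster (z : nat -> R -> R) (A : nat -> Prop) (L : R) (w : R -> R) : Prop :=
  forall eps, 0 < eps -> forall N, exists n, (N <= n)%nat /\ A n /\
    forall t, 0 <= t <= L -> Rabs (z n t - w t) <= eps.

Lemma nested_refinement (A0 : nat -> Prop) (Q : (nat -> Prop) -> nat -> Prop) :
  infinitely_often A0 ->
  (forall A j, infinitely_often A -> (forall n, A n -> A0 n) ->
     exists A', (forall n, A' n -> A n) /\ infinitely_often A' /\ Q A' j) ->
  exists Ak : nat -> nat -> Prop,
    (forall j n, Ak j n -> A0 n) /\ (forall j j' n, (j <= j')%nat -> Ak j' n -> Ak j n) /\
    (forall j, infinitely_often (Ak j)) /\ (forall j, Q (Ak j) j).
Proof.
  intros HA0 Hstep.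
  destruct (choice (fun (p : (nat -> Prop) * nat) A' =>
      infinitely_often (fst p) -> (forall n, fst p n -> A0 n) ->
      (forall n, A' n -> fst p n) /\ infinitely_often A' /\ Q A' (snd p))) as [refinement Hrefine].
  { intros [A j]. destruct (classic (infinitely_often A /\ forall n, A n -> A0 n)) as [[HA HAA0]|H].
    - destruct (Hstep A j HA HAA0) as [A' HA']. exists A'. auto.
    - exists A. intros HA HAA0. tauto. }
  set (Ak := fix Ak (j : nat) : nat -> Prop :=
         match j with O => refinement (A0, O) | S j' => refinement (Ak j', S j') end).
  assert (Hinv : forall j, infinitely_often (Ak j) /\ (forall n, Ak j n -> A0 n) /\ Q (Ak j) j).
  { induction j as [|j [IHio [IHsub IHQ]]].
    - destruct (Hrefine (A0, O) HA0 (fun n h => h)) as [Hsub [Hio HQ]]. auto.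
    - destruct (Hrefine (Ak j, S j) IHio IHsub) as [Hsub [Hio HQ]]. simpl in Hsub.
      split; [exact Hio|split; [auto|exact HQ]]. }
  assert (Hone : forall j n, Ak (S j) n -> Ak j n).
  { intros j. destruct (Hinv j) as [Hio [Hsub _]]. apply (Hrefine (Ak j, S j) Hio Hsub). }
  exists Ak. split; [apply Hinv|split; [|split; apply Hinv]].
  intros j j' n Hjj'. induction Hjj' as [|j' _ IH]; auto.
Qed.

Lemma nested_uniform_limit (z : nat -> R -> R) (L : R) (Ak : nat -> nat -> Prop) :
  (forall j j' n, (j <= j')%nat -> Ak j' n -> Ak j n) -> (forall j, infinitely_often (Ak j)) ->
  (forall j n m t, Ak j n -> Ak j m -> 0 <= t <= L -> Rabs (z n t - z m t) <= / INR (S j)) ->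
  exists w, forall j n t, Ak j n -> 0 <= t <= L -> Rabs (z n t - w t) <= / INR (S j).
Proof.
  intros Hnest Hio Hdiam.
  destruct (choice Ak) as [pick Hpick].
  { intros j. destruct (Hio j 0%nat) as [n [_ Hn]]. eauto. }
  destruct (choice (fun t l => 0 <= t <= L -> Un_cv (fun j => z (pick j) t) l)) as [w Hw].
  { intros t. destruct (classic (0 <= t <= L)) as [ht|ht]; [|exists 0; tauto].
    destruct (R_complete (fun j => z (pick j) t)) as [l Hl]; [|exists l; auto].
    intros eps he. destruct (inv_INR_S_small eps he) as [N HN]. exists N.
    intros j j' hj hj'. unfold R_dist. eapply Rle_lt_trans; [|exact HN].
    apply Hdiam; [apply (Hnest N j)|apply (Hnest N j')|]; auto. }
  exists w. intros j n t Hn ht. apply Rle_plus_epsilon. intros eps he.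
  destruct (Hw t ht eps he) as [N HN]. specialize (HN (max N j) ltac:(lia)). unfold R_dist in HN.
  pose proof (Hdiam j n (pick (max N j)) t Hn (Hnest j (max N j) _ ltac:(lia) (Hpick _)) ht) as D.
  apply Rabs_lt_between' in HN. apply Rabs_le_between' in D. apply Rabs_le_between'. lra.
Qed.

Lemma equilipschitz_uniform_cluster (z : nat -> R -> R) (A : nat -> Prop) (L K M : R) :
  0 <= L -> 0 <= K -> infinitely_often A ->
  (forall n t, A n -> 0 <= t <= L -> Rabs (z n t) <= M) ->
  (forall n t1 t2, A n -> 0 <= t1 <= L -> 0 <= t2 <= L ->
     Rabs (z n t1 - z n t2) <= K * Rabs (t1 - t2)) ->
  exists w, uniform_cluster z A L w.
Proof.
  intros hL hK HA Hb Hlip.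
  destruct (nested_refinement A (fun A' j => forall n m t, A' n -> A' m -> 0 <= t <= L ->
              Rabs (z n t - z m t) <= / INR (S j)) HA) as [Ak [HAkA [Hnest [Hio Hdiam]]]].
  { intros A' j HA' HA'A. apply (infinitely_often_uniformly_close z A' L K M); auto.
    apply Rinv_0_lt_compat, lt_0_INR. lia. }
  destruct (nested_uniform_limit z L Ak Hnest Hio Hdiam) as [w Hw].
  exists w. intros eps he N. destruct (inv_INR_S_small eps he) as [j Hj].
  destruct (Hio j N) as [n [hn Hn]]. exists n. split; [exact hn|split; [exact (HAkA j n Hn)|]].
  intros t ht. left. eapply Rle_lt_trans; [apply (Hw j); auto|exact Hj].
Qed.

Lemma bounded_pair_cluster (p q : nat -> R) (B : R) :
  (forall n, Rabs (p n) <= B /\ Rabs (q n) <= B) ->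
  exists a b, forall eps, 0 < eps -> forall N, exists n, (N <= n)%nat /\
    Rabs (p n - a) <= eps /\ Rabs (q n - b) <= eps.
Proof.
  intros Hpq.
  assert (hB : 0 <= B) by (destruct (Hpq 0%nat) as [Hp _]; pose proof (Rabs_pos (p 0%nat)); lra).
  (* Cluster the segments from [p n] to [q n]: their endpoints then cluster along the same
     indices. *)
  set (z := fun n s => p n + s * (q n - p n)).
  destruct (equilipschitz_uniform_cluster z (fun _ => True) 1 (2 * B) (3 * B))
    as [w Hw]; try lra.
  { intros N. exists N. auto. }
  { intros n s _ hs. destruct (Hpq n) as [Hp Hq]. apply Rabs_le_between in Hp, Hq.
    unfold z. apply Rabs_le. split; nra. }
  { intros n t1 t2 _ _ _. destruct (Hpq n) as [Hp Hq]. apply Rabs_le_between in Hp, Hq.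
    unfold z. replace (p n + t1 * (q n - p n) - (p n + t2 * (q n - p n)))
      with ((t1 - t2) * (q n - p n)) by ring.
    rewrite Rabs_mult, Rmult_comm. apply Rmult_le_compat_r; [apply Rabs_pos|].
    apply Rabs_le. lra. }
  exists (w 0), (w 1). intros eps he N. destruct (Hw eps he N) as [n [hn [_ Hn]]].
  exists n. split; [exact hn|].
  pose proof (Hn 0 ltac:(lra)) as H0. pose proof (Hn 1 ltac:(lra)) as H1.
  unfold z in H0, H1. rewrite Rmult_0_l, Rplus_0_r in H0.
  replace (p n + 1 * (q n - p n)) with (q n) in H1 by ring. auto.
Qed.

Lemma cont_RpR_bounded_on_rectangle (g : R -> R -> R) (T X : R) :
  cont_RpR g -> exists B, forall t x, 0 <= t <= T -> Rabs x <= X -> Rabs (g t x) <= B.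
Proof.
  intros Hg. apply NNPP. intros Hunb.
  assert (Hbig : forall n : nat, exists p : R * R,
             0 <= fst p <= T /\ Rabs (snd p) <= X /\ INR n < Rabs (g (fst p) (snd p))).
  { intros n. apply NNPP. intros Hn. apply Hunb. exists (INR n). intros t x ht hx.
    apply Rnot_lt_le. intros hl. apply Hn. exists (t, x). auto. }
  destruct (choice _ Hbig) as [pt Hpt].
  destruct (bounded_pair_cluster (fun n => fst (pt n)) (fun n => snd (pt n)) (T + X))
    as [a [b Hab]].
  { intros n. destruct (Hpt n) as [Ht [Hx _]]. pose proof (Rabs_pos (snd (pt n))).
    rewrite Rabs_right by lra. lra. }
  assert (ha : 0 <= a).
  { apply Rle_plus_epsilon. intros eps he. destruct (Hab eps he 0%nat) as [n [_ [Ha _]]].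
    destruct (Hpt n) as [Ht _]. apply Rabs_le_between' in Ha. lra. }
  destruct (Hg a b ha 1 ltac:(lra)) as [d [hd Hd]].
  destruct (INR_archimed 1 (Rabs (g a b) + 1) ltac:(lra)) as [N HN].
  destruct (Hab (d / 2) ltac:(lra) N) as [n [hn [Ha Hb]]].
  destruct (Hpt n) as [Ht [Hx Hn]].
  assert (Hclose := Hd (fst (pt n)) (snd (pt n)) ltac:(lra) ltac:(lra) ltac:(lra)).
  pose proof (le_INR _ _ hn). pose proof (Rabs_triang_inv (g (fst (pt n)) (snd (pt n))) (g a b)).
  lra.
Qed.

(** * Solutions of scalar equations *)

Lemma shift_0 (g : R -> R -> R) : shift g 0 = g.
Proof.
  unfold shift. apply functional_extensionality. intros t.
  rewrite Rplus_0_r. reflexivity.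
Qed.

Lemma solution_right_continuous_0 (g : R -> R -> R) (v : R) (u : R -> R) :
  is_solution g v u -> forall eps, 0 < eps ->
  exists delta, 0 < delta /\ forall h, 0 < h < delta -> Rabs (u h - u 0) < eps.
Proof.
  intros [_ [_ Hr]] eps he. destruct (Hr 1 ltac:(lra)) as [d [hd Hd]].
  set (c := Rabs (g 0 (u 0)) + 1).
  assert (hc : 0 < c) by (unfold c; pose proof (Rabs_pos (g 0 (u 0))); lra).
  exists (Rmin d (eps / c)). split; [apply Rmin_pos; [lra|apply Rdiv_lt_0_compat; lra]|].
  intros h [hh1 hh2]. pose proof (Rmin_l d (eps / c)). pose proof (Rmin_r d (eps / c)).
  specialize (Hd h ltac:(lra)).
  assert (Hq : Rabs ((u h - u 0) / h) < c).
  { unfold c. pose proof (Rabs_triang_inv ((u h - u 0) / h) (g 0 (u 0))). lra. }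
  replace (u h - u 0) with (h * ((u h - u 0) / h)) by (field; lra).
  rewrite Rabs_mult, (Rabs_right h) by lra.
  apply Rlt_le_trans with (h * c); [apply Rmult_lt_compat_l; lra|].
  apply Rle_div_r; lra.
Qed.

Lemma solution_continuity_pt (g : R -> R -> R) (v : R) (u : R -> R) (t : R) :
  is_solution g v u -> 0 < t -> continuity_pt u t.
Proof. intros [_ [Hd _]] ht. apply derivable_continuous_pt. exists (g t (u t)). apply Hd, ht. Qed.

Lemma solution_cont_Rp (g : R -> R -> R) (v : R) (u : R -> R) :
  is_solution g v u -> cont_Rp u.
Proof.
  intros Hu t ht eps he. destruct ht as [ht|<-].
  - destruct (solution_continuity_pt g v u t Hu ht eps he) as [d [hd Hclose]].
    exists d. split; [exact hd|]. intros t' _ ht'.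
    destruct (Req_dec t' t) as [->|ne]; [rewrite Rminus_diag, Rabs_R0; exact he|].
    apply Hclose. split; [split; [exact I|auto]|exact ht'].
  - destruct (solution_right_continuous_0 g v u Hu eps he) as [d [hd Hd]].
    exists d. split; [exact hd|]. intros t' [ht'|<-] hd'.
    + apply Hd. rewrite Rminus_0_r, Rabs_right in hd' by lra. lra.
    + rewrite Rminus_diag, Rabs_R0. exact he.
Qed.

Lemma derivable_pt_lim_translate (u : R -> R) (s a l : R) :
  derivable_pt_lim u (s + a) l -> derivable_pt_lim (fun t => u (t + a)) s l.
Proof.
  intros H eps he. destruct (H eps he) as [d Hd]. exists d. intros h hn hh.
  replace (s + h + a) with (s + a + h) by ring. auto.
Qed.

Lemma derivable_pt_lim_locally_eq (u1 u2 : R -> R) (t l d : R) : 0 < d ->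
  (forall s, Rabs (s - t) < d -> u1 s = u2 s) ->
  derivable_pt_lim u1 t l -> derivable_pt_lim u2 t l.
Proof.
  intros hd E H eps he. destruct (H eps he) as [d1 Hd1].
  assert (hm : 0 < Rmin d d1) by (apply Rmin_pos; [exact hd|apply cond_pos]).
  exists (mkposreal _ hm). intros h hn hh. simpl in hh.
  pose proof (Rmin_l d d1). pose proof (Rmin_r d d1).
  rewrite <- !E; [apply Hd1; auto; lra| |].
  - rewrite Rminus_diag, Rabs_R0. exact hd.
  - replace (t + h - t) with h by ring. lra.
Qed.

Lemma is_solution_shift (g : R -> R -> R) (v : R) (u : R -> R) (s : R) :
  is_solution g v u -> 0 < s -> is_solution (shift g s) (u s) (fun t => u (t + s)).
Proof.
  intros [_ [Hd _]] hs. split; [|split].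
  - rewrite Rplus_0_l. reflexivity.
  - intros t ht. apply derivable_pt_lim_translate, Hd. lra.
  - intros eps he. destruct (Hd s hs eps he) as [d Hd1]. exists d. split; [apply cond_pos|].
    intros h [hh1 hh2]. unfold shift. rewrite !Rplus_0_l, (Rplus_comm h s).
    apply Hd1; [lra|]. rewrite Rabs_right; lra.
Qed.

Lemma is_solution_ext (g1 g2 : R -> R -> R) (v : R) (u : R -> R) :
  (forall t x, 0 <= t -> g1 t x = g2 t x) -> is_solution g1 v u -> is_solution g2 v u.
Proof.
  intros E [H0 [Hd Hr]]. split; [exact H0|split].
  - intros t ht. rewrite <- E by lra. auto.
  - intros eps he. destruct (Hr eps he) as [d [hd Hd1]]. exists d. split; [exact hd|].
    intros h hh. rewrite <- E by lra. auto.
Qed.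

Definition forward_unique (g : R -> R -> R) : Prop :=
  forall s, 0 <= s -> forall v u1 u2,
    is_solution (shift g s) v u1 -> is_solution (shift g s) v u2 ->
    forall t, 0 <= t -> u1 t = u2 t.

Lemma solution_order_preserving (g : R -> R -> R) : forward_unique g ->
  forall v1 v2 u1 u2, is_solution g v1 u1 -> is_solution g v2 u2 -> v1 <= v2 ->
  forall t, 0 <= t -> u1 t <= u2 t.
Proof.
  intros Hg v1 v2 u1 u2 H1 H2 hv t ht. apply Rnot_lt_le. intros hlt.
  pose proof (proj1 H1) as E1. pose proof (proj1 H2) as E2.
  destruct (Req_dec v1 v2) as [<-|ne].
  { rewrite <- (shift_0 g) in H1, H2. rewrite (Hg 0 (Rle_refl 0) v1 u1 u2 H1 H2 t ht) in hlt. lra. }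
  assert (htp : 0 < t) by (destruct ht as [ht|<-]; [exact ht|lra]).
  (* Just after time 0 the solutions are still ordered, so they cross at some time c; from
     there on they solve the same initial value problem. *)
  destruct (solution_right_continuous_0 g v1 u1 H1 ((v2 - v1) / 3) ltac:(lra)) as [d1 [hd1 Hd1]].
  destruct (solution_right_continuous_0 g v2 u2 H2 ((v2 - v1) / 3) ltac:(lra)) as [d2 [hd2 Hd2]].
  set (a := Rmin (Rmin d1 d2) t / 2).
  assert (ha : 0 < a /\ a < d1 /\ a < d2 /\ a < t).
  { unfold a. pose proof (Rmin_l (Rmin d1 d2) t). pose proof (Rmin_r (Rmin d1 d2) t).
    pose proof (Rmin_l d1 d2). pose proof (Rmin_r d1 d2).
    assert (0 < Rmin (Rmin d1 d2) t) by (repeat apply Rmin_pos; lra). lra. }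
  specialize (Hd1 a ltac:(lra)). specialize (Hd2 a ltac:(lra)).
  rewrite E1 in Hd1. rewrite E2 in Hd2. apply Rabs_lt_between' in Hd1, Hd2.
  destruct (IVT_interv (fun s => u1 s - u2 s) a t) as [c [hc Ec]]; try lra.
  { intros s hs. apply continuity_pt_minus;
      [apply (solution_continuity_pt g v1)|apply (solution_continuity_pt g v2)]; auto; lra. }
  pose proof (is_solution_shift g v1 u1 c H1 ltac:(lra)) as S1.
  pose proof (is_solution_shift g v2 u2 c H2 ltac:(lra)) as S2.
  replace (u2 c) with (u1 c) in S2 by lra.
  pose proof (Hg c ltac:(lra) _ _ _ S1 S2 (t - c) ltac:(lra)) as E.
  simpl in E. replace (t - c + c) with t in E by ring. lra.
Qed.

Definition solves_on (g : R -> R -> R) (w : R -> R) (L : R) : Prop :=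
  forall t, 0 <= t <= L -> forall eps, 0 < eps -> exists delta, 0 < delta /\
    forall h, h <> 0 -> 0 <= t + h <= L -> Rabs h < delta ->
      Rabs ((w (t + h) - w t) / h - g t (w t)) < eps.

Lemma solves_on_derivable (g : R -> R -> R) (w : R -> R) (L t : R) :
  solves_on g w L -> 0 < t < L -> derivable_pt_lim w t (g t (w t)).
Proof.
  intros Hw ht eps he. destruct (Hw t ltac:(lra) eps he) as [d [hd Hd]].
  assert (hm : 0 < Rmin d (Rmin t (L - t))) by (repeat apply Rmin_pos; lra).
  exists (mkposreal _ hm). intros h hn hh. simpl in hh.
  pose proof (Rmin_l d (Rmin t (L - t))). pose proof (Rmin_r d (Rmin t (L - t))).
  pose proof (Rmin_l t (L - t)). pose proof (Rmin_r t (L - t)).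
  apply Rabs_lt_between in hh. apply Hd; [exact hn|lra|apply Rabs_lt_between; lra].
Qed.

Lemma periodic_add_nat {B : Type} (p : R -> B) (tau : R) : 0 <= tau ->
  (forall t, 0 <= t -> p (t + tau) = p t) ->
  forall n t, 0 <= t -> p (t + INR n * tau) = p t.
Proof.
  intros htau Hp. induction n as [|n IH]; intros t ht.
  - simpl. rewrite Rmult_0_l, Rplus_0_r. reflexivity.
  - rewrite S_INR. replace (t + (INR n + 1) * tau) with (t + INR n * tau + tau) by ring.
    rewrite Hp; [apply IH; exact ht|]. pose proof (pos_INR n). nra.
Qed.

Lemma period_decompose (tau t : R) : 0 < tau -> 0 <= t ->
  exists n : nat, INR n * tau <= t < INR n * tau + tau.
Proof.
  intros htau ht. destruct (nfloor_ex (t / tau)) as [n [Hn1 Hn2]]; [apply Rdiv_le_0_compat; lra|].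
  exists n. split.
  - apply Rle_div_r; lra.
  - apply Rlt_div_l in Hn2; lra.
Qed.

Lemma MVT_between (u u' : R -> R) (a b : R) :
  (forall c, Rmin a b <= c <= Rmax a b -> derivable_pt_lim u c (u' c)) ->
  exists c, Rmin a b <= c <= Rmax a b /\ u b - u a = u' c * (b - a).
Proof.
  intros Hd. destruct (Rtotal_order a b) as [hab|[<-|hab]].
  - rewrite Rmin_left, Rmax_right in * by lra.
    destruct (MVT_cor2 u u' a b hab Hd) as [c [E hc]]. exists c. split; [lra|exact E].
  - exists a. rewrite Rmin_left, Rmax_left by lra. split; [lra|ring].
  - rewrite Rmin_right, Rmax_left in * by lra.
    destruct (MVT_cor2 u u' b a hab Hd) as [c [E hc]]. exists c. split; [lra|].
    replace (u b - u a) with (- (u a - u b)) by ring. rewrite E. ring.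
Qed.

(* Continuing a solution on [0, tau] of a tau-periodic equation by the solution issued from its
   endpoint gives a solution on R_+; this is how uniqueness on R_+ yields uniqueness on [0, tau]. *)
Definition concat_at (tau : R) (w psi : R -> R) (t : R) : R :=
  if Rle_dec t tau then w t else psi (t - tau).

Lemma concat_at_left (tau : R) (w psi : R -> R) (t : R) : t <= tau -> concat_at tau w psi t = w t.
Proof. intros ht. unfold concat_at. destruct (Rle_dec t tau); [reflexivity|lra]. Qed.

Lemma concat_at_right (tau : R) (w psi : R -> R) (t : R) :
  tau < t -> concat_at tau w psi t = psi (t - tau).
Proof. intros ht. unfold concat_at. destruct (Rle_dec t tau); [lra|reflexivity]. Qed.

Section Concatenation.
Variables (g : R -> R -> R) (tau : R) (w psi : R -> R).
Hypothesis Htau : 0 < tau.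
Hypothesis Hper : forall t x, 0 <= t -> g (t + tau) x = g t x.
Hypothesis Hw : solves_on g w tau.
Hypothesis Hpsi : is_solution g (w tau) psi.

Lemma concat_at_derivable_at_tau :
  derivable_pt_lim (concat_at tau w psi) tau (g tau (concat_at tau w psi tau)).
Proof.
  destruct Hpsi as [Hpsi0 [_ Hpsir]].
  rewrite concat_at_left by lra. intros eps he.
  destruct (Hw tau ltac:(lra) eps he) as [d1 [hd1 Hd1]].
  destruct (Hpsir eps he) as [d2 [hd2 Hd2]].
  assert (hm : 0 < Rmin (Rmin d1 d2) tau) by (repeat apply Rmin_pos; lra).
  exists (mkposreal _ hm). intros h hn hh. simpl in hh.
  pose proof (Rmin_l (Rmin d1 d2) tau). pose proof (Rmin_r (Rmin d1 d2) tau).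
  pose proof (Rmin_l d1 d2). pose proof (Rmin_r d1 d2).
  apply Rabs_lt_between in hh as hh'. rewrite (concat_at_left tau w psi tau) by lra.
  destruct (Rlt_dec h 0) as [hneg|hpos].
  - rewrite concat_at_left by lra. apply Hd1; [exact hn|lra|lra].
  - rewrite concat_at_right by lra. replace (tau + h - tau) with h by ring.
    replace (g tau (w tau)) with (g 0 (psi 0))
      by (rewrite Hpsi0, <- (Hper 0) by lra; rewrite Rplus_0_l; reflexivity).
    rewrite <- Hpsi0. apply Hd2. lra.
Qed.

Lemma concat_at_solution : is_solution g (w 0) (concat_at tau w psi).
Proof.
  destruct Hpsi as [_ [Hpsid _]]. split; [|split].
  - apply concat_at_left. lra.
  - intros t ht. destruct (Rtotal_order t tau) as [hlt|[->|hgt]].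
    + rewrite concat_at_left by lra.
      apply (derivable_pt_lim_locally_eq w _ t _ (Rmin t (tau - t))); [apply Rmin_pos; lra| |].
      * intros s hs. pose proof (Rmin_r t (tau - t)). apply Rabs_lt_between in hs.
        rewrite concat_at_left; [reflexivity|lra].
      * apply (solves_on_derivable g w tau); [exact Hw|lra].
    + exact concat_at_derivable_at_tau.
    + rewrite concat_at_right by exact hgt.
      apply (derivable_pt_lim_locally_eq (fun s => psi (s + - tau)) _ t _ (t - tau)); [lra| |].
      * intros s hs. apply Rabs_lt_between in hs. rewrite concat_at_right by lra. reflexivity.
      * replace (g t (psi (t - tau))) with (g (t + - tau) (psi (t + - tau)))
          by (rewrite <- Hper by lra; f_equal; ring).
        apply derivable_pt_lim_translate, Hpsid. lra.
  - intros eps he. destruct (Hw 0 ltac:(lra) eps he) as [d [hd Hd]].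
    exists (Rmin d tau). split; [apply Rmin_pos; lra|].
    intros h [hh1 hh2]. pose proof (Rmin_l d tau). pose proof (Rmin_r d tau).
    rewrite !concat_at_left by lra. rewrite <- (Rplus_0_l h) at 1.
    apply Hd; [lra|lra|rewrite Rabs_right; lra].
Qed.

End Concatenation.

(** * The limit equation x' = P(t, x) *)

Section LimitEquation.
Variables (tau : R) (f P Rm : R -> R -> R).
Hypothesis Htau : 0 < tau.
Hypothesis Hreg : regular f.
Hypothesis Hdec : asympt_periodic_decomp tau f P Rm.

Lemma P_periodic (t x : R) : 0 <= t -> P (t + tau) x = P t x.
Proof. destruct Hdec as [_ [_ [_ [Hp _]]]]. apply Hp. Qed.

Lemma P_periodic_nat (n : nat) (t x : R) : 0 <= t -> P (t + INR n * tau) x = P t x.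
Proof.
  apply (periodic_add_nat (fun s => P s x)); [lra|]. intros s hs. apply P_periodic, hs.
Qed.

Lemma f_eq_P_add_Rm_nat (n : nat) (t x : R) : 0 <= t ->
  f (t + INR n * tau) x = P t x + Rm (t + INR n * tau) x.
Proof.
  intros ht. destruct Hdec as [_ [_ [Hf _]]].
  rewrite Hf, P_periodic_nat by (pose proof (pos_INR n); nra). reflexivity.
Qed.

Lemma P_in_hull_shift (s : R) : 0 <= s -> in_hull f (shift P s).
Proof.
  intros hs. destruct Hdec as [HcP [_ [_ [_ HR]]]]. split.
  - intros t x ht eps he. destruct (HcP (t + s) x ltac:(lra) eps he) as [d [hd Hd]].
    exists d. split; [exact hd|]. intros t' x' ht' h1 h2. unfold shift. apply Hd; [lra| |exact h2].
    replace (t' + s - (t + s)) with (t' - t) by ring. exact h1.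
  - (* [f] shifted by [s + n tau] differs from [shift P s] only by the decaying [Rm]. *)
    intros L eps he. destruct (HR L eps he) as [T HT].
    destruct (INR_archimed tau T Htau) as [n Hn].
    exists (s + INR n * tau). split; [pose proof (pos_INR n); nra|].
    intros t x ht hx. unfold shift.
    replace (t + (s + INR n * tau)) with (t + s + INR n * tau) by ring.
    rewrite f_eq_P_add_Rm_nat by lra.
    replace (P (t + s) x + Rm (t + s + INR n * tau) x - P (t + s) x)
      with (Rm (t + s + INR n * tau) x) by ring.
    apply HT; [lra|exact hx].
Qed.

Lemma P_in_hull : in_hull f P.
Proof. rewrite <- (shift_0 P). apply P_in_hull_shift. lra. Qed.

Lemma P_forward_unique : forward_unique P.
Proof.
  intros s hs v. destruct Hreg as [_ Hr]. apply (proj2 (Hr _ (P_in_hull_shift s hs) v)).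
Qed.

Definition phi (v : R) : R -> R :=
  epsilon (inhabits (fun _ : R => 0)) (fun u => is_solution P v u).

Lemma phi_solution (v : R) : is_solution P v (phi v).
Proof.
  unfold phi. apply epsilon_spec. destruct Hreg as [_ Hr]. apply (proj1 (Hr _ P_in_hull v)).
Qed.

Lemma phi_0 (v : R) : phi v 0 = v.
Proof. apply (phi_solution v). Qed.

Lemma phi_unique (v : R) (u : R -> R) : is_solution P v u -> forall t, 0 <= t -> u t = phi v t.
Proof.
  intros Hu. rewrite <- (shift_0 P) in Hu.
  apply (P_forward_unique 0 (Rle_refl 0) v); [exact Hu|]. rewrite shift_0. apply phi_solution.
Qed.

Lemma phi_monotone (v1 v2 t : R) : v1 <= v2 -> 0 <= t -> phi v1 t <= phi v2 t.
Proof.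
  intros hv ht.
  apply (solution_order_preserving P P_forward_unique v1 v2); auto; apply phi_solution.
Qed.

Lemma phi_periodic (v : R) : phi v tau = v -> forall t, 0 <= t -> phi v (t + tau) = phi v t.
Proof.
  intros Hfix t ht. apply (phi_unique v (fun s => phi v (s + tau))); [|exact ht].
  rewrite <- Hfix at 1. apply (is_solution_ext (shift P tau) P (phi v tau)).
  - intros s x hs. apply P_periodic, hs.
  - apply (is_solution_shift P v); [apply phi_solution|exact Htau].
Qed.

Lemma solves_on_eq_phi (w : R -> R) : solves_on P w tau ->
  forall t, 0 <= t <= tau -> w t = phi (w 0) t.
Proof.
  intros Hw t ht. rewrite <- (concat_at_left tau w (phi (w tau)) t) by lra.
  apply phi_unique; [|lra]. apply concat_at_solution; [exact Htau| |exact Hw|apply phi_solution].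
  intros s x hs. apply P_periodic, hs.
Qed.

Lemma P_bounded (X : R) : exists B, forall t x, 0 <= t -> Rabs x <= X -> Rabs (P t x) <= B.
Proof.
  destruct Hdec as [HcP _]. destruct (cont_RpR_bounded_on_rectangle P tau X HcP) as [B HB].
  exists B. intros t x ht hx. destruct (period_decompose tau t Htau ht) as [n Hn].
  replace t with (t - INR n * tau + INR n * tau) by ring.
  rewrite P_periodic_nat by lra. apply HB; [lra|exact hx].
Qed.

(** * Translates of the bounded solution *)

Variables (u0 : R) (y : R -> R) (M : R).
Hypothesis Hy : is_solution f u0 y.
Hypothesis HM : forall t, 0 <= t -> Rabs (y t) <= M.

Definition yn (n : nat) (t : R) : R := y (t + INR n * tau).

Lemma yn_next (n : nat) : yn n tau = yn (S n) 0.
Proof. unfold yn. rewrite S_INR. f_equal. ring. Qed.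

Lemma yn_bounded (n : nat) (t : R) : 0 <= t -> Rabs (yn n t) <= M.
Proof. intros ht. apply HM. pose proof (pos_INR n). nra. Qed.

Lemma yn_derivable (n : nat) (t : R) : (1 <= n)%nat -> 0 <= t ->
  derivable_pt_lim (yn n) t (P t (yn n t) + Rm (t + INR n * tau) (yn n t)).
Proof.
  intros hn ht. unfold yn at 2 3. rewrite <- f_eq_P_add_Rm_nat by exact ht.
  apply derivable_pt_lim_translate. destruct Hy as [_ [Hd _]]. apply Hd.
  apply le_INR in hn. simpl in hn. nra.
Qed.

Lemma Rm_small_along_y (eps : R) : 0 < eps -> exists N, (1 <= N)%nat /\
  forall n t x, (N <= n)%nat -> 0 <= t -> Rabs x <= M -> Rabs (Rm (t + INR n * tau) x) < eps.
Proof.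
  intros he. destruct Hdec as [_ [_ [_ [_ HR]]]]. destruct (HR M eps he) as [T HT].
  destruct (INR_archimed tau T Htau) as [N HN]. exists (S N). split; [lia|].
  intros n t x hn ht hx. apply HT; [|exact hx].
  apply le_INR in hn. rewrite S_INR in hn. nra.
Qed.

Lemma yn_equilipschitz : exists K N0, 0 <= K /\ forall n, (N0 <= n)%nat ->
  forall t1 t2, 0 <= t1 -> 0 <= t2 -> Rabs (yn n t1 - yn n t2) <= K * Rabs (t1 - t2).
Proof.
  destruct (P_bounded M) as [B HB]. destruct (Rm_small_along_y 1 ltac:(lra)) as [N [hN HN]].
  exists (Rabs B + 1), N. split; [pose proof (Rabs_pos B); lra|]. intros n hn t1 t2 h1 h2.
  pose proof (Rmin_glb t2 t1 0 h2 h1).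
  destruct (MVT_abs (yn n) (fun c => P c (yn n c) + Rm (c + INR n * tau) (yn n c)) t2 t1)
    as [c [E hc]].
  { intros c hc. apply yn_derivable; lia || lra. }
  rewrite E. apply Rmult_le_compat_r; [apply Rabs_pos|].
  eapply Rle_trans; [apply Rabs_triang|]. apply Rplus_le_compat.
  - eapply Rle_trans; [apply HB|apply Rle_abs]; [lra|apply yn_bounded; lra].
  - left. apply HN; [exact hn|lra|apply yn_bounded; lra].
Qed.

Lemma yn_approx_P (eps : R) : 0 < eps -> exists N, forall n, (N <= n)%nat ->
  forall t h, 0 <= t -> 0 <= t + h -> exists c, 0 <= c /\ Rabs (c - t) <= Rabs h /\
    Rabs (yn n (t + h) - yn n t - P c (yn n c) * h) <= eps * Rabs h.
Proof.
  intros he. destruct (Rm_small_along_y eps he) as [N [hN HN]]. exists N.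
  intros n hn t h ht hth.
  destruct (MVT_between (yn n) (fun c => P c (yn n c) + Rm (c + INR n * tau) (yn n c)) t (t + h))
    as [c [hc E]].
  { intros c hc. apply yn_derivable; [lia|].
    unfold Rmin, Rmax in hc. destruct (Rle_dec t (t + h)); lra. }
  assert (hct : 0 <= c /\ Rabs (c - t) <= Rabs h).
  { pose proof (Rle_abs h). pose proof (Rle_abs (- h)). rewrite Rabs_Ropp in *.
    split; [|apply Rabs_le]; unfold Rmin, Rmax in hc; destruct (Rle_dec t (t + h)); lra. }
  exists c. split; [apply hct|split; [apply hct|]].
  rewrite E. replace (t + h - t) with h by ring.
  replace ((P c (yn n c) + Rm (c + INR n * tau) (yn n c)) * h - P c (yn n c) * h)
    with (Rm (c + INR n * tau) (yn n c) * h) by ring.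
  rewrite Rabs_mult. apply Rmult_le_compat_r; [apply Rabs_pos|].
  left. apply HN; [exact hn|apply hct|apply yn_bounded, hct].
Qed.

Lemma uniform_cluster_solves_on_P (A : nat -> Prop) (L : R) (w : R -> R) :
  uniform_cluster yn A L w -> solves_on P w L.
Proof.
  intros Hcl t ht eps he. destruct Hdec as [HcP _].
  destruct (HcP t (w t) (proj1 ht) (eps / 3) ltac:(lra)) as [d [hd Hd]].
  destruct yn_equilipschitz as [K [N0 [hK HK]]].
  destruct (yn_approx_P (eps / 3) ltac:(lra)) as [N1 HN1].
  exists (d / (2 * (K + 1))). split; [apply Rdiv_lt_0_compat; lra|].
  intros h hn hth hh.
  assert (hah : 0 < Rabs h) by (apply Rabs_pos_lt; exact hn).
  apply Rlt_div_r in hh; [|lra].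
  assert (hKh : K * Rabs h < d / 2 /\ Rabs h < d / 2) by (split; nra).
  pose proof (Rmin_l (d / 4) (eps * Rabs h / 6)). pose proof (Rmin_r (d / 4) (eps * Rabs h / 6)).
  set (eta := Rmin (d / 4) (eps * Rabs h / 6)) in *.
  assert (heta : 0 < eta) by (apply Rmin_pos; nra).
  destruct (Hcl eta heta (max N0 N1)) as [n [hnN [_ Hn]]].
  destruct (HN1 n ltac:(lia) t h (proj1 ht) (proj1 hth)) as [c [hc0 [hct Happ]]].
  pose proof (Hn t ht) as E0. pose proof (Hn (t + h) hth) as E1.
  assert (HPc : Rabs (P c (yn n c) - P t (w t)) < eps / 3).
  { apply Hd; [exact hc0|lra|].
    pose proof (HK n ltac:(lia) c t hc0 (proj1 ht)) as Hlip.
    pose proof (Rmult_le_compat_l K _ _ hK hct).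
    apply Rabs_le_between' in Hlip. apply Rabs_le_between' in E0. apply Rabs_lt_between'. lra. }
  assert (EP : Rabs ((P c (yn n c) - P t (w t)) * h) < eps / 3 * Rabs h)
    by (rewrite Rabs_mult; apply Rmult_lt_compat_r; assumption).
  replace ((w (t + h) - w t) / h - P t (w t)) with ((w (t + h) - w t - P t (w t) * h) / h)
    by (field; exact hn).
  rewrite Rabs_div by exact hn. apply Rlt_div_l; [exact hah|].
  apply Rabs_le_between' in E0, E1. apply Rabs_le_between in Happ. apply Rabs_lt_between in EP.
  apply Rabs_lt_between. lra.
Qed.

Lemma yn_cluster_phi (A : nat -> Prop) : infinitely_often A ->
  exists v, uniform_cluster yn A tau (phi v).
Proof.
  intros HA. destruct yn_equilipschitz as [K [N0 [hK HK]]].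
  set (A0 := fun n => A n /\ (N0 <= n)%nat).
  destruct (equilipschitz_uniform_cluster yn A0 tau K M) as [w Hw]; [lra|exact hK| | | |].
  - intros N. destruct (HA (max N N0)) as [n [hn An]]. exists n. split; [lia|split; [exact An|lia]].
  - intros n t _ ht. apply yn_bounded, ht.
  - intros n t1 t2 [_ hn] h1 h2. apply HK; [exact hn|apply h1|apply h2].
  - pose proof (solves_on_eq_phi w (uniform_cluster_solves_on_P A0 tau w Hw)) as Hphi.
    exists (w 0). intros eps he N. destruct (Hw eps he N) as [n [hn [[An _] Hn]]].
    exists n. split; [exact hn|split; [exact An|]]. intros t ht. rewrite <- Hphi by exact ht. auto.
Qed.

(** * The sequence y(n tau) *)

Lemma yn_step_lower (d eps : R) : 0 < eps -> exists N, forall n, (N <= n)%nat ->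
  d <= yn n 0 -> phi d tau - eps <= yn (S n) 0.
Proof.
  intros he. apply NNPP. intros H. apply not_eventually_infinitely_often in H.
  destruct (yn_cluster_phi _ H) as [v Hv].
  destruct (Rlt_or_le v d) as [hvd|hdv].
  - destruct (Hv ((d - v) / 2) ltac:(lra) 0%nat) as [n [_ [Hn Hcl]]].
    apply imply_to_and in Hn as [Hdn _]. specialize (Hcl 0 ltac:(lra)). rewrite phi_0 in Hcl.
    apply Rabs_le_between' in Hcl. lra.
  - destruct (Hv (eps / 2) ltac:(lra) 0%nat) as [n [_ [Hn Hcl]]].
    apply imply_to_and in Hn as [_ Hlt]. apply Rnot_le_lt in Hlt.
    specialize (Hcl tau ltac:(lra)). rewrite yn_next in Hcl.
    pose proof (phi_monotone d v tau hdv ltac:(lra)). apply Rabs_le_between' in Hcl. lra.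
Qed.

Lemma yn_step_upper (d eps : R) : 0 < eps -> exists N, forall n, (N <= n)%nat ->
  yn n 0 <= d -> yn (S n) 0 <= phi d tau + eps.
Proof.
  intros he. apply NNPP. intros H. apply not_eventually_infinitely_often in H.
  destruct (yn_cluster_phi _ H) as [v Hv].
  destruct (Rlt_or_le d v) as [hdv|hvd].
  - destruct (Hv ((v - d) / 2) ltac:(lra) 0%nat) as [n [_ [Hn Hcl]]].
    apply imply_to_and in Hn as [Hdn _]. specialize (Hcl 0 ltac:(lra)). rewrite phi_0 in Hcl.
    apply Rabs_le_between' in Hcl. lra.
  - destruct (Hv (eps / 2) ltac:(lra) 0%nat) as [n [_ [Hn Hcl]]].
    apply imply_to_and in Hn as [_ Hlt]. apply Rnot_le_lt in Hlt.
    specialize (Hcl tau ltac:(lra)). rewrite yn_next in Hcl.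
    pose proof (phi_monotone v d tau hvd ltac:(lra)). apply Rabs_le_between' in Hcl. lra.
Qed.

Lemma oscillation_fixed_points (c1 c2 : R) :
  infinitely_often (fun n => yn n 0 <= c1) -> infinitely_often (fun n => c2 <= yn n 0) ->
  forall d, c1 < d < c2 -> phi d tau = d.
Proof.
  intros Hlo Hhi d hd.
  destruct (Rtotal_order (phi d tau) d) as [hlt|[heq|hgt]]; [exfalso|exact heq|exfalso].
  - destruct (yn_step_upper d ((d - phi d tau) / 2) ltac:(lra)) as [N HN].
    destruct (Hlo N) as [n [hn Hn]]. destruct (Hhi n) as [m [hm Hm]].
    assert (yn m 0 <= d); [|lra].
    apply (forward_invariant (fun k => yn k 0 <= d) N n); [|exact hn|lra|exact hm].
    intros k hk Hk. pose proof (HN k hk Hk). lra.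
  - destruct (yn_step_lower d ((phi d tau - d) / 2) ltac:(lra)) as [N HN].
    destruct (Hhi N) as [n [hn Hn]]. destruct (Hlo n) as [m [hm Hm]].
    assert (d <= yn m 0); [|lra].
    apply (forward_invariant (fun k => d <= yn k 0) N n); [|exact hn|lra|exact hm].
    intros k hk Hk. pose proof (HN k hk Hk). lra.
Qed.

Hypothesis Hiso : periodic_solutions_isolated P tau.

Lemma yn_no_oscillation (c1 c2 : R) : c1 < c2 ->
  infinitely_often (fun n => yn n 0 <= c1) -> infinitely_often (fun n => c2 <= yn n 0) -> False.
Proof.
  intros hc Hlo Hhi. pose proof (oscillation_fixed_points c1 c2 Hlo Hhi) as Hfix.
  set (d := (c1 + c2) / 2).
  destruct (Hiso d) as [delta [hdelta Hdelta]].
  { exists (phi d). split; [apply phi_solution|]. apply Hfix. unfold d. lra. }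
  pose proof (Rmin_l delta ((c2 - c1) / 2)). pose proof (Rmin_r delta ((c2 - c1) / 2)).
  assert (hm : 0 < Rmin delta ((c2 - c1) / 2)) by (apply Rmin_pos; lra).
  set (m := Rmin delta ((c2 - c1) / 2)) in *.
  apply (Hdelta (d + m / 2)); [lra| |].
  - replace (d + m / 2 - d) with (m / 2) by ring. rewrite Rabs_right; lra.
  - exists (phi (d + m / 2)). split; [apply phi_solution|]. apply Hfix. unfold d. lra.
Qed.

Lemma yn_start_cvg : exists v, Un_cv (fun n => yn n 0) v.
Proof.
  destruct (yn_cluster_phi (fun _ => True)) as [v Hv]; [intros N; exists N; auto|].
  exists v. apply cvg_of_cluster_value_no_oscillation; [|exact yn_no_oscillation].
  intros eps he N. destruct (Hv eps he N) as [n [hn [_ Hn]]]. exists n. split; [exact hn|].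
  rewrite <- (phi_0 v). apply Hn. lra.
Qed.

Lemma uniform_cluster_start (A : nat -> Prop) (v w : R) :
  Un_cv (fun n => yn n 0) v -> uniform_cluster yn A tau (phi w) -> w = v.
Proof.
  intros Hv Hw. apply eq_of_close. intros eps he.
  destruct (Hv (eps / 2) ltac:(lra)) as [N HN].
  destruct (Hw (eps / 2) ltac:(lra) N) as [n [hn [_ Hn]]].
  specialize (HN n hn). specialize (Hn 0 ltac:(lra)). rewrite phi_0 in Hn. unfold R_dist in HN.
  apply Rabs_lt_between' in HN. apply Rabs_le_between' in Hn. apply Rabs_le_between'. lra.
Qed.

Lemma start_limit_fixed (v : R) : Un_cv (fun n => yn n 0) v -> phi v tau = v.
Proof.
  intros Hv. destruct (yn_cluster_phi (fun _ => True)) as [w Hw]; [intros N; exists N; auto|].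
  rewrite (uniform_cluster_start _ v w Hv Hw) in Hw.
  apply eq_of_close. intros eps he.
  destruct (Hv (eps / 2) ltac:(lra)) as [N HN].
  destruct (Hw (eps / 2) ltac:(lra) N) as [n [hn [_ Hn]]].
  specialize (HN (S n) ltac:(lia)). specialize (Hn tau ltac:(lra)). rewrite yn_next in Hn.
  unfold R_dist in HN. apply Rabs_lt_between' in HN. apply Rabs_le_between' in Hn.
  apply Rabs_le_between'. lra.
Qed.

Lemma yn_uniform_cvg (v : R) : Un_cv (fun n => yn n 0) v ->
  forall eps, 0 < eps -> exists N, forall n, (N <= n)%nat ->
    forall s, 0 <= s <= tau -> Rabs (yn n s - phi v s) < eps.
Proof.
  intros Hv eps he. apply NNPP. intros H. apply not_eventually_infinitely_often in H.
  destruct (yn_cluster_phi _ H) as [w Hw].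
  rewrite (uniform_cluster_start _ v w Hv Hw) in Hw.
  destruct (Hw (eps / 2) ltac:(lra) 0%nat) as [n [_ [Hn Hcl]]].
  apply Hn. intros s hs. specialize (Hcl s hs). lra.
Qed.

Lemma y_asymptotic_to_phi (v : R) : Un_cv (fun n => yn n 0) v ->
  forall eps, 0 < eps -> exists T, forall t, T <= t -> Rabs (y t - phi v t) < eps.
Proof.
  intros Hv eps he. destruct (yn_uniform_cvg v Hv eps he) as [N HN].
  exists (INR N * tau). intros t ht. pose proof (pos_INR N).
  destruct (period_decompose tau t Htau ltac:(nra)) as [n [hn1 hn2]].
  assert (hNn : (N <= n)%nat).
  { cut (INR N < INR (S n)); [intros Hlt; apply INR_lt in Hlt; lia|].
    rewrite S_INR. apply (Rmult_lt_reg_r tau); lra. }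
  specialize (HN n hNn (t - INR n * tau) ltac:(lra)).
  unfold yn in HN. replace (t - INR n * tau + INR n * tau) with t in HN by ring.
  replace (phi v t) with (phi v (t - INR n * tau + INR n * tau)) by (f_equal; ring).
  rewrite (periodic_add_nat (phi v) tau) by (lra || apply phi_periodic, start_limit_fixed, Hv).
  exact HN.
Qed.

End LimitEquation.

Theorem mainTheorem15 (tau : R) (f P Rm : R -> R -> R) (u0 : R) (y : R -> R) :
  0 < tau ->
  regular f ->
  asympt_periodic_decomp tau f P Rm ->
  periodic_solutions_isolated P tau ->
  is_solution f u0 y ->
  (exists M, forall t, 0 <= t -> Rabs (y t) <= M) ->
  exists p : R -> R,
    cont_Rp p /\
    (forall t, 0 <= t -> p (t + tau) = p t) /\
    (forall eps, 0 < eps -> exists T, forall t, T <= t -> Rabs (y t - p t) < eps).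
Proof.
  intros Htau Hreg Hdec Hiso Hy [M HM].
  destruct (yn_start_cvg tau f P Rm Htau Hreg Hdec u0 y M Hy HM Hiso) as [v Hv].
  exists (phi P v). split; [|split].
  - exact (solution_cont_Rp P v _ (phi_solution tau f P Rm Htau Hreg Hdec v)).
  - exact (phi_periodic tau f P Rm Htau Hreg Hdec v
             (start_limit_fixed tau f P Rm Htau Hreg Hdec u0 y M Hy HM v Hv)).
  - exact (y_asymptotic_to_phi tau f P Rm Htau Hreg Hdec u0 y M Hy HM v Hv).
Qed.
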